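(* Let $p>5$ be a prime with $p\equiv 3\pmod 4$. Then $$\binom{-1/4}{\frac{p-1}{2}}^{-1}\equiv\frac{(-1)^{(p+1)/4}}{\binom{(p-1)/2}{(p-3)/4}}\bigl(1-3p+p\,q_p(2)\bigr)\pmod{p^2}.$$
   Context: $q_p(2)=(2^{p-1}-1)/p$ is the Fermat quotient. For a rational $a$ and integer $n\ge0$, $\binom{a}{n}=a(a-1)\cdots(a-n+1)/n!$. For rationals $a,b$ with denominators prime to $p$, $a\equiv b\pmod{p^m}$ means $(a-b)/p^m$ has denominator prime to $p$. *)

From HB Require Import structures.
From mathcomp Require Import all_boot all_order all_algebra.
Set Implicit Arguments. Unset Strict Implicit. Unset Printing Implicit Defensive.
Import Order.TTheory GRing.Theory Num.Theory.
Local Open Scope ring_scope.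

Definition binq (a : rat) (n : nat) : rat :=
  (\prod_(i < n) (a - (i : nat)%:R)) / (n`!)%:R.

Definition fermat_q2 (p : nat) : rat := ((2 ^ p.-1 - 1)%N)%:R / p%:R.

Definition p_integral (p : nat) (a : rat) : Prop := coprime p `|denq a|%N.

Definition congr_rat (p m : nat) (a b : rat) : Prop :=
  [/\ p_integral p a, p_integral p b & p_integral p ((a - b) / (p ^ m)%:R)].

From mathcomp Require Import all_boot all_order all_algebra.
From mathcomp Require Import zify ring.
Set Implicit Arguments. Unset Strict Implicit. Unset Printing Implicit Defensive.
Import Order.TTheory GRing.Theory Num.Theory.
Local Open Scope ring_scope.

(* Write p = 4m + 3 and n = (p - 1)/2 = 2m + 1.  Then binq (-1/4) n = - P / (4^n n!)
   with P = prod_(i <= 2m) (4i + 1), and 4^n = 2^(p-1) = 1 + p q_p(2).  Pairing the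
   factors of P gives P = prod_(l < m) (p^2 - (4l + 2)^2) = (-1)^m S^2 (mod p^2) with
   S = prod_(l < m) (4l + 2), while (2m + 1)! = (2m + 1) S m!.  Clearing the p-adic
   units P and n!, the claim becomes the integer congruence
   (2m + 1)^2 (1 + pq) = (m + 1)(1 - 3p + pq) (mod p^2), and the difference of the
   two sides is exactly p^2 (1 + mq). *)

Lemma p_integral_frac (p : nat) (r : int) (b : nat) :
  coprime p b -> p_integral p (r%:~R / b%:R).
Proof.
rewrite /p_integral -[b]/(`|b%:Z|%N) -[b%:R]/((b%:Z)%:~R : rat).
case: divqP => [_|k x _]; first by rewrite coprimen1.
by rewrite abszM; apply: coprime_dvdr; apply: dvdn_mull.
Qed.

Lemma congr_rat_frac (p k : nat) (a b : int) (u v : nat) :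
  (1 < p)%N -> coprime p u -> coprime p v -> ((p ^ k)%N %| a * v - b * u)%Z ->
  congr_rat p k (a%:~R / u%:R) (b%:~R / v%:R).
Proof.
move=> p_gt1 pu pv /dvdzP [z Dz].
have natr_coprime_neq0 w : coprime p w -> (w%:R : rat) != 0.
  by apply: contraTneq => /eqP; rewrite pnatr_eq0 => /eqP ->; rewrite /coprime gcdn0; lia.
have pk0 : ((p ^ k)%:R : rat) != 0 by rewrite pnatr_eq0 expn_eq0; lia.
split; [exact: p_integral_frac | exact: p_integral_frac |].
have Dz' : a%:~R * v%:R - b%:~R * u%:R = z%:~R * (p ^ k)%:R :> rat.
  by have := congr1 (intr : int -> rat) Dz; rewrite rmorphB !rmorphM.
have -> : (a%:~R / u%:R - b%:~R / v%:R) / (p ^ k)%:R = z%:~R / (u * v)%:R :> rat.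
  by rewrite -[z%:~R](mulfK pk0) -Dz' natrM; field; rewrite pk0 !natr_coprime_neq0.
by apply: p_integral_frac; rewrite coprimeMr pu.
Qed.

Definition prod_4i1 (n : nat) : nat := \prod_(i < n) (4 * i + 1).
Definition prod_4i2 (m : nat) : nat := \prod_(i < m) (4 * i + 2).

Lemma binq_neg_quarter (n : nat) :
  binq (- (1 / 4%:R)) n = (-1) ^+ n * (prod_4i1 n)%:R / (4 ^ n * n`!)%:R.
Proof.
rewrite /binq /prod_4i1 natrM natrX invfM mulrA; congr (_ / _).
elim: n => [|n IH]; first by rewrite !big_ord0 mulr1 divr1.
rewrite !big_ord_recr /= IH natrM !exprS natrD natrM.
by field; rewrite expf_neq0.
Qed.

Lemma fact_oddE (m : nat) : ((m + m).+1`! = (m + m).+1 * prod_4i2 m * m`!)%N.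
Proof.
rewrite /prod_4i2; elim: m => [|m IH]; first by rewrite big_ord0.
rewrite big_ord_recr /= !addnS !addSn (factS (m + m).+2) (factS (m + m).+1) IH factS; ring.
Qed.

(* The factor 4i + 1 is paired with 4(2m - i) + 1, giving (p - (4l + 2))(p + (4l + 2))
   with p = 4m + 3. *)
Lemma prod_4i1_pairs (m : nat) :
  (prod_4i1 (m + m).+1)%:Z =
  \prod_(l < m) (((4 * m + 3)%N%:Z) ^+ 2 - ((4 * l + 2)%N%:Z) ^+ 2).
Proof.
rewrite /prod_4i1 -natz natr_prod big_ord_recl /= mul1r big_split_ord /=.
rewrite (reindex_inj rev_ord_inj) /= -big_split /=.
apply: eq_bigr => -[i /= /subnK <-] _.
by rewrite /bump /= addnK -!natz -addn1 !(natrD, natrM); ring.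
Qed.

Lemma prod_sub_mod (I : Type) (r : seq I) (x : int) (c : I -> int) :
  (\prod_(i <- r) (x - c i) = \prod_(i <- r) (- c i) %[mod x])%Z.
Proof.
elim/big_rec2: _ => // i a b _ IH.
by rewrite -modzMml modzDl modzMml -modzMmr IH modzMmr.
Qed.

Lemma prod_4i1_mod (m : nat) :
  ((-1) ^+ m * (prod_4i1 (m + m).+1)%:Z = (prod_4i2 m)%:Z ^+ 2
     %[mod ((4 * m + 3)%N%:Z) ^+ 2])%Z.
Proof.
rewrite prod_4i1_pairs -modzMmr prod_sub_mod modzMmr.
under eq_bigr => l _ do rewrite -mulN1r.
rewrite big_split /= prodr_const card_ord signrMK /prod_4i2 prodrXl.
by rewrite (big_morph Posz PoszM erefl).
Qed.

Lemma coprime_fact (p k : nat) : prime p -> (k < p)%N -> coprime p k`!.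
Proof.
move=> pp; elim: k => [|k IH] lt_kp; first by rewrite coprimen1.
rewrite factS coprimeMr IH ?andbT 1?ltnW // prime_coprime //.
by apply/negP => /(dvdn_leq (ltn0Sn k)); lia.
Qed.

Lemma coprime_prod_4i1 (m : nat) :
  prime (4 * m + 3) -> coprime (4 * m + 3) (prod_4i1 (m + m).+1).
Proof.
move=> pp; apply: (big_ind (coprime _)) => [|x y|i _]; first exact: coprimen1.
  by rewrite coprimeMr => -> ->.
have := ltn_ord i; rewrite prime_coprime // => lt_i.
by apply/negP => /dvdnP [[|[|k]] Dk]; lia.
Qed.

Lemma dvdn_pow2_pred_sub1 (p : nat) : prime p -> odd p -> (p %| 2 ^ p.-1 - 1)%N.
Proof.
move=> pp p_odd; rewrite -(Gauss_dvdr _ (n := 2)) ?coprimen2 //.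
rewrite mulnBr muln1 -expnS prednK ?prime_gt0 // -eqn_mod_dvd ?fermat_little //.
by rewrite -[leqLHS]expn1 leq_pexp2l ?prime_gt0.
Qed.

Lemma quarter_binq_cross_congr (m p q : nat) :
  p = (4 * m + 3)%N -> (4 ^ (m + m).+1 = q * p + 1)%N ->
  (- (4 ^ (m + m).+1 * (m + m).+1`!)%N%:Z * (m + m).+1`!
     == (-1) ^+ m.+1 * (m`! * m.+1`!)%N%:Z * (1 - 3 * p%:Z + p%:Z * q)
          * prod_4i1 (m + m).+1 %[mod (p ^ 2)%N])%Z.
Proof.
move=> Dp D4; have -> : (p ^ 2)%N%:Z = p%:Z ^+ 2 by rewrite -natz natrX natz.
have /eqP := prod_4i1_mod m; rewrite -Dp eqz_mod_dvd => /dvdzP [k Dk].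
rewrite [(-1) ^+ m.+1]exprS mulN1r !mulNr -!mulrA mulrCA [(-1) ^+ m * _]mulrCA.
rewrite -[(-1) ^+ m * _](subrK ((prod_4i2 m)%:Z ^+ 2)) Dk eqz_mod_dvd; apply/dvdzP.
exists ((m`! * m.+1`!)%N%:Z * (1 - 3 * p%:Z + p%:Z * q) * k
        - (prod_4i2 m)%:Z ^+ 2 * m`! ^+ 2 * (1 + m * q)).
rewrite D4 fact_oddE factS Dp.
(* (2m + 1)^2 (1 + pq) = (m + 1)(1 - 3p + pq) + p^2 (1 + mq) for p = 4m + 3 *)
rewrite -!natz !(natrD, natrM); ring.
Qed.

Lemma invr_bin (R : numFieldType) (n m : nat) :
  (m <= n)%N -> ('C(n, m)%:R : R)^-1 = (m`! * (n - m)`!)%:R / n`!%:R.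
Proof.
move=> le_mn; rewrite -(bin_fact le_mn); set f := (_ * _)%N.
have f_gt0 : (0 < f)%N by rewrite muln_gt0 !fact_gt0.
by rewrite natrM invfM mulrCA divff ?mulr1 // pnatr_eq0 -lt0n.
Qed.

Theorem lemma2p3 (p : nat) (pp : prime p) (p_gt5 : (5 < p)%N) (p3 : (p %% 4 = 3)%N) :
  congr_rat p 2
    (binq (- (1 / 4%:R)) (p.-1 %/ 2))^-1
    ((-1) ^+ ((p + 1) %/ 4) / ('C((p.-1) %/ 2, (p - 3) %/ 4))%:R
       * (1 - 3 * p%:R + p%:R * fermat_q2 p)).
Proof.
have [m Dp] : exists m, p = (4 * m + 3)%N by exists (p %/ 4)%N; lia.
have -> : (p.-1 %/ 2 = (m + m).+1)%N by lia.
have -> : ((p + 1) %/ 4 = m.+1)%N by lia.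
have -> : ((p - 3) %/ 4 = m)%N by lia.
have p_odd : odd p by rewrite Dp oddD oddM.
have /divnK Dq := dvdn_pow2_pred_sub1 pp p_odd; set q := (_ %/ p)%N in Dq.
have -> : fermat_q2 p = q%:R by rewrite /fermat_q2 -Dq natrM mulfK // pnatr_eq0; lia.
have D4 : (4 ^ (m + m).+1 = q * p + 1)%N.
  by rewrite -[4%N]/(2 ^ 2)%N -expnM (_ : 2 * _ = p.-1)%N ?Dq ?subnK ?expn_gt0 //; lia.
set n := (m + m).+1.
have -> : (binq (- (1 / 4%:R)) n)^-1 = (- (4 ^ n * n`!)%N%:Z)%:~R / (prod_4i1 n)%:R.
  rewrite binq_neg_quarter -signr_odd /= addnn odd_double mulN1r.
  by rewrite mulNr invrN invf_div rmorphN mulNr.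
rewrite [X in congr_rat _ _ _ X](_ : _ =
    ((-1) ^+ m.+1 * (m`! * m.+1`!)%N%:Z * (1 - 3 * p%:Z + p%:Z * q))%:~R / n`!%:R :> rat).
  apply: congr_rat_frac; first by lia.
  - by rewrite Dp coprime_prod_4i1 // -Dp.
  - by rewrite coprime_fact //; lia.
  by rewrite -eqz_mod_dvd quarter_binq_cross_congr.
rewrite mulrAC invr_bin; last by rewrite ltnW // ltnS leq_addr.
rewrite (_ : (n - m)%N = m.+1); last by rewrite /n -addSn addnK.
rewrite !(intrD, intrN, intrM) rmorphXn rmorphN1 rmorph1.
by field; rewrite pnatr_eq0 -lt0n fact_gt0.
Qed.
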